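(* Let $S$ and $R$ be finite sequences of propositional formulae and $F$ a propositional formula. If $S \equiv S \cdot [F]$ then $S \cdot R \equiv S \cdot [F] \cdot R$.
   Context: Models are truth assignments. For a formula $G$: $I \leq_G J$ iff $I \models G$ or $J \not\models G$. For a sequence $S=[S_1,\ldots,S_m]$: $I \leq_S J$ iff either $S=[]$, or ($I \leq_{S_1} J$ and (either $J \not\leq_{S_1} I$ or $I \leq_{S'} J$)), where $S'=[S_2,\ldots,S_m]$. For sequences, $S\equiv R$ means $I \leq_S J$ and $I\leq_R J$ coincide for all pairs of models $I,J$. $\cdot$ denotes concatenation of sequences. *)

From Stdlib Require Import List.
Import ListNotations.

Inductive form : Type :=
  | Var : nat -> form
  | Bot : form
  | Top : form
  | Not : form -> form
  | And : form -> form -> form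
  | Or  : form -> form -> form
  | Imp : form -> form -> form.

Definition model := nat -> bool.

Fixpoint sat (I : model) (f : form) : Prop :=
  match f with
  | Var n => I n = true
  | Bot => False
  | Top => True
  | Not g => ~ sat I g
  | And g h => sat I g /\ sat I h
  | Or g h => sat I g \/ sat I h
  | Imp g h => sat I g -> sat I h
  end.

Definition le_form (G : form) (I J : model) : Prop :=
  sat I G \/ ~ sat J G.

Fixpoint le_seq (S : list form) (I J : model) : Prop :=
  match S with
  | [] => True
  | S1 :: S' => le_form S1 I J /\ (~ le_form S1 J I \/ le_seq S' I J)
  end.

Definition seq_equiv (S R : list form) : Prop :=
  forall I J : model, le_seq S I J <-> le_seq R I J.

From Stdlib Require Import List Classical.
Import ListNotations.

(* [<=_(S ++ T)] is the lexicographic refinement of [<=_S] by [<=_T], so it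
   depends on [S] only through [<=_S]. *)

Lemma le_seq_app (S T : list form) (I J : model) :
  le_seq (S ++ T) I J <-> le_seq S I J /\ (~ le_seq S J I \/ le_seq T I J).
Proof.
  revert I J; induction S as [|G S IH]; intros I J; simpl.
  - tauto.
  - rewrite IH.
    destruct (classic (le_form G J I)), (classic (le_seq S J I)); tauto.
Qed.

Lemma seq_equiv_app_r (S S' R : list form) :
  seq_equiv S S' -> seq_equiv (S ++ R) (S' ++ R).
Proof.
  intros HS I J.
  rewrite !le_seq_app, (HS I J), (HS J I).
  reflexivity.
Qed.

Theorem corollary4 (S R : list form) (F : form) :
  seq_equiv S (S ++ [F]) -> seq_equiv (S ++ R) (S ++ [F] ++ R).
Proof.
  rewrite app_assoc.
  apply seq_equiv_app_r.
Qed.
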